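(* In the setting and for the algorithm OOPE described in the context, let $l_M$ denote the number of phases up to and including the penultimate phase (the last phase being the one in which the online samples are exhausted). Define $H^{-1}:\mathbb{R}_{\ge0}\to\mathbb{N}\cup\{0\}$ by $H^{-1}(x)=\max\{n\in\mathbb{N}\cup\{0\}:\sum_{l=1}^n4^l\log(4l^2|\mathcal{A}|T)\le x\}$. Then $l_M\le H^{-1}\big(\frac{T}{3d_{\mathrm{eff}}}\big)$.
   Context: Setting: $\mathcal{A}\subset\mathbb{R}^d$ finite, known, $\mathrm{span}(\mathcal{A})=\mathbb{R}^d$; unknown $\theta^*\in\mathbb{R}^d$; pulling $a$ yields $\langle\theta^*,a\rangle+\eta$, $\eta$ zero-mean 1-sub-Gaussian independent; $T_{\mathrm{off}}$ offline samples collected non-adaptively by fixed $\pi_{\mathrm{off}}\in\Delta(\mathcal{A})$ ($\pi_{\mathrm{off}}(a)T_{\mathrm{off}}$ from arm $a$, same reward law); then $T$ online rounds. Notation: $V_\pi=\sum_a\pi(a)aa^\top$, $g_{\mathcal{B}}(\pi)=\max_{a\in\mathcal{B}}a^\top V_\pi^{-1}a$, $\lambda_k$ the $k$-th smallest eigenvalue, $d_{\mathrm{eff}}=\min\big(\sum_{k=1}^d(1+\frac{T_{\mathrm{off}}}{T}\frac{\lambda_k(V_{\pi_{\mathrm{off}}})}{\max_a\|a\|^2})^{-1},\frac{T}{T_{\mathrm{off}}}g_{\mathcal{A}}(\pi_{\mathrm{off}})\big)$. Algorithm OOPE: $\alpha=T_{\mathrm{off}}/(T_{\mathrm{off}}+T)$,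 $\mathcal{A}_1=\mathcal{A}$. Phase $l$: if $|\mathcal{A}_l|=1$ pull its arm for all remaining rounds. Else $\epsilon_l=2^{-l}$, $\pi^*_{l,\mathrm{on}}\in\arg\max_{\pi\in\Delta(\mathcal{A}_l)}\log\det V_{(1-\alpha)\pi+\alpha\pi_{\mathrm{off}}}$, $\tilde\pi_l=(1-\alpha)\pi^*_{l,\mathrm{on}}+\alpha\pi_{\mathrm{off}}$; for each arm $a$ in turn take $n^l_{\mathrm{on}}(a)=\lceil3d_{\mathrm{eff}}\pi^*_{l,\mathrm{on}}(a)\log(4l^2|\mathcal{A}|T)/\epsilon_l^2\rceil$ new online pulls and request $n^l_{\mathrm{off}}(a)=\lceil2\alpha\pi_{\mathrm{off}}(a)g_{\mathcal{A}_l}(\tilde\pi_l)\log(4l^2|\mathcal{A}|T)/\epsilon_l^2\rceil$ offline samples of $a$ not used before (all remaining if fewer). If the online budget would be exceeded, the remaining rounds are used and the algorithm stops without elimination. Otherwise compute the least-squares estimate $\hat\theta_l$ from phase-$l$ samples only, and set $\mathcal{A}_{l+1}=\mathcal{A}_l\setminus\{a:\max_{a'\in\mathcal{A}_l}\langle a'-a,\hat\theta_l\rangle\ge2\epsilon_l\}$. *)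

From HB Require Import structures.
From mathcomp Require Import all_boot all_order all_algebra.
From mathcomp Require Import reals exp.
Set Implicit Arguments.
Unset Strict Implicit.
Unset Printing Implicit Defensive.
Import Order.TTheory GRing.Theory Num.Theory.
Local Open Scope ring_scope.

Section OOPE.
Variable R : realType.
Variables d K : nat.
(* the arm set A = {arm a | a : 'I_K} (arm injective), arms are column vectors *)
Variable arm : 'I_K -> 'cV[R]_d.
Variable theta : 'cV[R]_d.
Variables T Toff : nat.                (* online horizon, offline sample size *)
Variable pioff : 'I_K -> R.
Variable cnt : 'I_K -> nat.            (* number of offline samples of arm a = pi_off(a) T_off *)
Variable eta_on : nat -> R.            (* noise realisation of online round s (s = 0,1,...) *)
Variable eta_off : 'I_K -> nat -> R.   (* noise realisation of j-th offline sample of arm a *)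
Variable lam : 'I_d -> R.              (* lam k = (k+1)-th smallest eigenvalue of V_{pi_off} *)
Variable pistar : nat -> {set 'I_K} -> 'I_K -> R. (* design pi*_{l,on} chosen for A_l *)

Definition inner (x y : 'cV[R]_d) : R := (x^T *m y) 0 0.
Definition qf (M : 'M[R]_d) (x : 'cV[R]_d) : R := (x^T *m M *m x) 0 0.

Definition Vmat (pi : 'I_K -> R) : 'M[R]_d := \sum_a pi a *: (arm a *m (arm a)^T).

Definition simplex (B : {set 'I_K}) (pi : 'I_K -> R) : Prop :=
  (forall a, 0 <= pi a) /\ (forall a, a \notin B -> pi a = 0) /\ \sum_a pi a = 1.

Definition gB (B : {set 'I_K}) (pi : 'I_K -> R) : R :=
  \big[Num.max/0]_(a in B) qf (invmx (Vmat pi)) (arm a).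

Definition maxnorm2 : R := \big[Num.max/0]_a inner (arm a) (arm a).

Definition deff_first : R :=
  \sum_(k < d) (1 + (Toff%:R / T%:R) * (lam k / maxnorm2))^-1.

(* d_eff; the second term of the min is +oo when T_off = 0 or V_{pi_off} singular *)
Definition deff : R :=
  if (0 < Toff)%N && (Vmat pioff \in unitmx)
  then Num.min deff_first (T%:R / Toff%:R * gB [set: 'I_K] pioff)
  else deff_first.

Definition alpha : R := Toff%:R / (Toff%:R + T%:R).
Definition mix (pi : 'I_K -> R) (a : 'I_K) : R := (1 - alpha) * pi a + alpha * pioff a.

Definition eps (l : nat) : R := (2 ^+ l)^-1.
Definition lg (l : nat) : R := ln (4 * (l ^ 2)%:R * K%:R * T%:R).
Definition cnat (x : R) : nat := `|Num.ceil x|%N.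

Definition non (l : nat) (S : {set 'I_K}) (a : 'I_K) : nat :=
  cnat (3 * deff * pistar l S a * lg l / eps l ^+ 2).
Definition noff (l : nat) (S : {set 'I_K}) (a : 'I_K) : nat :=
  cnat (2 * alpha * pioff a * gB S (mix (pistar l S)) * lg l / eps l ^+ 2).

Definition Non (l : nat) (S : {set 'I_K}) : nat := \sum_a non l S a.

(* first online round used for arm a in phase l (arms processed in order),
   t = number of online rounds used before phase l *)
Definition start (l : nat) (S : {set 'I_K}) (t : nat) (a : 'I_K) : nat :=
  t + \sum_(b < K | (b < a)%N) non l S b.

(* offline samples of arm a actually used in phase l, u a = offline samples of a used before *)
Definition moff (l : nat) (S : {set 'I_K}) (u : 'I_K -> nat) (a : 'I_K) : nat :=
  minn (noff l S a) (cnt a - u a).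

(* least-squares estimate from phase-l samples only *)
Definition gram (l : nat) (S : {set 'I_K}) (u : 'I_K -> nat) : 'M[R]_d :=
  \sum_a (non l S a + moff l S u a)%:R *: (arm a *m (arm a)^T).

Definition yvec (l : nat) (S : {set 'I_K}) (t : nat) (u : 'I_K -> nat) : 'cV[R]_d :=
  \sum_a ((\sum_(s < non l S a) (inner (arm a) theta + eta_on (start l S t a + s)))
          + (\sum_(j < moff l S u a) (inner (arm a) theta + eta_off a (u a + j)))) *: arm a.

Definition thetahat (l : nat) (S : {set 'I_K}) (t : nat) (u : 'I_K -> nat) : 'cV[R]_d := invmx (gram l S u) *m yvec l S t u.

Definition elim (l : nat) (S : {set 'I_K}) (t : nat) (u : 'I_K -> nat) : {set 'I_K} :=
  [set a in S | ~~ [exists a' in S, 2 * eps l <= inner (arm a' - arm a) (thetahat l S t u)]].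

(* Number of phases that complete (i.e. end with an elimination step), executed
   with at most [fuel] phases, starting at phase l with active set S, t online
   rounds used and u a offline samples of arm a used.  A phase with |A_l| <= 1,
   or whose online pulls would exceed the budget T, is the last phase. *)
Fixpoint completed (fuel l : nat) (S : {set 'I_K}) (t : nat) (u : 'I_K -> nat) : nat :=
  match fuel with
  | 0 => 0
  | fuel'.+1 =>
      if (#|S| <= 1)%N then 0
      else if (T < t + Non l S)%N then 0
      else (completed fuel' l.+1 (elim l S t u) (t + Non l S)
                      (fun a => u a + moff l S u a)).+1
  end.

(* l_M when the algorithm is run with fuel for at most [fuel] phases *)
Definition lM (fuel : nat) : nat := completed fuel 1 [set: 'I_K] 0 (fun _ => 0%N).

Definition Hsum (n : nat) : R := \sum_(1 <= l < n.+1) 4 ^+ l * lg l.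
Definition is_Hinv (x : R) (h : nat) : Prop :=
  Hsum h <= x /\ forall n : nat, Hsum n <= x -> (n <= h)%N.

End OOPE.

(* Each phase l that completes spends at least 3 d_eff 4^l log(4 l^2 |A| T)
   online rounds: the ceilings n_on(a) dominate their arguments, whose sum
   over a is that quantity since the design pi*_l is a probability vector.
   Hence 3 d_eff H(l_M) <= T.  Dividing needs d_eff > 0, which holds because
   V_{pi_off} is positive semidefinite: its eigenvalues are nonnegative, and
   a^T V^-1 a > 0 for every nonzero arm a when V is invertible. *)
From HB Require Import structures.
From mathcomp Require Import all_boot all_order all_algebra.
From mathcomp Require Import reals exp.
From mathcomp Require Import ring.
Set Implicit Arguments.
Unset Strict Implicit.
Unset Printing Implicit Defensive.
Import Order.TTheory GRing.Theory Num.Theory.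
Local Open Scope ring_scope.

Section QuadraticForms.
Variables (R : realType) (d : nat).

Lemma innerC (x y : 'cV[R]_d) : inner x y = inner y x.
Proof. by rewrite /inner -[x^T *m y]trmxK trmx_mul trmxK mxE. Qed.

Lemma psd_eigenvalue_ge0 (M : 'M[R]_d) (a : R) :
  (forall x, 0 <= qf M x) -> eigenvalue M a -> 0 <= a.
Proof.
move=> M_psd /eigenvalueP [v vM v_neq0].
have := M_psd v^T; rewrite /qf trmxK vM -scalemxAl mxE.
have vvT_gt0 : 0 < (v *m v^T) 0 0.
  have sq_ge0 (j : 'I_d) : true -> 0 <= v 0 j * v^T j 0.
    by move=> _; rewrite mxE -expr2 sqr_ge0.
  rewrite mxE lt_neqAle sumr_ge0 // andbT eq_sym; apply: contra v_neq0 => /eqP vv0.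
  apply/eqP/matrixP => i j; rewrite (ord1 i) mxE.
  by have /eqP := psumr_eq0P sq_ge0 vv0 (i := j) isT; rewrite mxE -expr2 sqrf_eq0 => /eqP.
by rewrite pmulr_lge0.
Qed.

End QuadraticForms.

Section DesignMatrix.
Variables (R : realType) (d K : nat) (arm : 'I_K -> 'cV[R]_d).
Variable pi : 'I_K -> R.
Hypothesis pi_ge0 : forall a, 0 <= pi a.

Local Notation V := (Vmat arm pi).

Lemma qf_Vmat (x : 'cV[R]_d) : qf V x = \sum_a pi a * inner (arm a) x ^+ 2.
Proof.
rewrite /qf /Vmat mulmx_sumr mulmx_suml summxE; apply: eq_bigr => a _.
rewrite -scalemxAr -scalemxAl mxE mulmxA -(mulmxA (x^T *m arm a)) mxE.
by rewrite big_ord_recl big_ord0 addr0 -/(inner x (arm a)) innerC expr2.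
Qed.

Lemma tr_Vmat : V^T = V.
Proof.
apply/matrixP => i j; rewrite /Vmat !mxE !summxE; apply: eq_bigr => a _.
rewrite !mxE !big_ord_recl !big_ord0 !addr0 !mxE; congr (_ * _); exact: mulrC.
Qed.

Let sqr_term_ge0 (x : 'cV[R]_d) (a : 'I_K) : true -> 0 <= pi a * inner (arm a) x ^+ 2.
Proof. by move=> _; rewrite mulr_ge0 ?pi_ge0 ?sqr_ge0. Qed.

Lemma qf_Vmat_ge0 (x : 'cV[R]_d) : 0 <= qf V x.
Proof. by rewrite qf_Vmat; apply: sumr_ge0 (sqr_term_ge0 x). Qed.

Lemma qf_Vmat_eq0 (y : 'cV[R]_d) : qf V y = 0 -> V *m y = 0.
Proof.
rewrite qf_Vmat => qf0; rewrite /Vmat mulmx_suml big1 // => a _.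
have /eqP := psumr_eq0P (sqr_term_ge0 y) qf0 (i := a) isT.
rewrite -scalemxAl -mulmxA [(arm a)^T *m y]mx11_scalar mul_mx_scalar scalerA.
by rewrite mulf_eq0 sqrf_eq0 /inner => /orP [] /eqP ->; rewrite ?mul0r ?mulr0 scale0r.
Qed.

Lemma qf_invmx_Vmat_gt0 (x : 'cV[R]_d) :
  V \in unitmx -> x != 0 -> 0 < qf (invmx V) x.
Proof.
move=> V_unit x_neq0; set y := invmx V *m x.
have x_def : x = V *m y by rewrite /y mulKVmx.
have -> : qf (invmx V) x = qf V y.
  by rewrite /qf -mulmxA -/y {1}x_def trmx_mul tr_Vmat mulmxA.
rewrite lt_neqAle qf_Vmat_ge0 andbT eq_sym; apply: contra x_neq0 => /eqP qf0.
by rewrite x_def qf_Vmat_eq0.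
Qed.

Lemma Vmat_eigenvalue_ge0 (a : R) : root (char_poly V) a -> 0 <= a.
Proof. by rewrite -eigenvalue_root_char; apply: psd_eigenvalue_ge0 qf_Vmat_ge0. Qed.

Lemma gB_setT_gt0 : (0 < d)%N -> V \in unitmx -> 0 < gB arm [set: 'I_K] pi.
Proof.
move=> d_gt0 V_unit; have [a arm_a_neq0 | arms0] := pickP (fun a => arm a != 0).
  by rewrite /gB (bigD1 a) ?in_setT //= lt_max qf_invmx_Vmat_gt0.
have V0 : V = 0.
  by rewrite /Vmat big1 // => b _; rewrite (eqP (negbFE (arms0 b))) mul0mx scaler0.
have := mulmxV V_unit; rewrite V0 mul0mx => /matrixP /(_ (Ordinal d_gt0) (Ordinal d_gt0)).
by rewrite !mxE eqxx => /eqP; rewrite eq_sym oner_eq0.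
Qed.

End DesignMatrix.

Lemma deff_gt0 (R : realType) (d K : nat) (arm : 'I_K -> 'cV[R]_d)
    (T Toff : nat) (pioff : 'I_K -> R) (lam : 'I_d -> R) :
  (0 < d)%N -> (0 < T)%N -> (forall a, 0 <= pioff a) ->
  char_poly (Vmat arm pioff) = \prod_(i < d) ('X - (lam i)%:P) ->
  0 < deff arm T Toff pioff lam.
Proof.
move=> d_gt0 T_gt0 pioff_ge0 charV.
have lam_ge0 k : 0 <= lam k.
  apply: (Vmat_eigenvalue_ge0 (arm := arm) pioff_ge0).
  by rewrite charV /root horner_prod (bigD1 k) //= hornerXsubC subrr mul0r.
have maxnorm2_ge0 : 0 <= maxnorm2 arm.
  by apply: (big_rec (fun x => 0 <= x)) => // i y _ y_ge0; rewrite le_max y_ge0 orbT.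
have term_gt0 k : 0 < (1 + Toff%:R / T%:R * (lam k / maxnorm2 arm))^-1.
  by rewrite invr_gt0 ltr_wpDr ?ltr01 // mulr_ge0 ?divr_ge0 ?ler0n ?lam_ge0.
have first_gt0 : 0 < deff_first arm T Toff lam.
  rewrite /deff_first (bigD1 (Ordinal d_gt0)) //= ltr_wpDr ?term_gt0 //.
  by rewrite sumr_ge0 // => k _; rewrite ltW.
rewrite /deff; case: ifP => // /andP [Toff_gt0 V_unit].
by rewrite lt_min first_gt0 mulr_gt0 ?divr_gt0 ?ltr0n ?(gB_setT_gt0 pioff_ge0).
Qed.

Lemma cnat_ge (R : realType) (x : R) : x <= (cnat x)%:R.
Proof.
rewrite /cnat natr_absz; apply: le_trans (real_ceil_ge (num_real x)) _.
by rewrite ler_int ler_norm.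
Qed.

Lemma eps_sqr (R : realType) (l : nat) : eps R l ^+ 2 = (4 ^+ l)^-1.
Proof. by rewrite /eps exprVn -exprM mulnC exprM -[2 ^+ 2]natrX. Qed.

Section OnlineBudget.
Variables (R : realType) (d K : nat) (arm : 'I_K -> 'cV[R]_d) (theta : 'cV[R]_d).
Variables (T Toff : nat) (pioff : 'I_K -> R) (cnt : 'I_K -> nat).
Variables (eta_on : nat -> R) (eta_off : 'I_K -> nat -> R) (lam : 'I_d -> R).
Variable pistar : nat -> {set 'I_K} -> 'I_K -> R.
Hypothesis pistar_sum1 :
  forall l (S : {set 'I_K}), (1 < #|S|)%N -> \sum_a pistar l S a = 1.

Local Notation D := (deff arm T Toff pioff lam).
Local Notation Non := (Non arm T Toff pioff lam pistar).
Local Notation moff := (moff arm T Toff pioff cnt pistar).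
Local Notation elim := (elim arm theta T Toff pioff cnt eta_on eta_off lam pistar).
Local Notation completed :=
  (completed arm theta T Toff pioff cnt eta_on eta_off lam pistar).

Lemma Non_ge l (S : {set 'I_K}) :
  (1 < #|S|)%N -> 3 * D * (4 ^+ l * lg R K T l) <= (Non l S)%:R.
Proof.
move=> S_gt1; rewrite /Non natr_sum; apply: le_trans (ler_sum _ (fun a _ => cnat_ge _)).
have non_arg a : 3 * D * pistar l S a * lg R K T l / eps R l ^+ 2
               = 3 * D * (4 ^+ l * lg R K T l) * pistar l S a.
  by rewrite eps_sqr invrK; ring.
by rewrite (eq_bigr _ (fun a _ => non_arg a)) -mulr_sumr pistar_sum1 ?mulr1.
Qed.

Lemma completed_cost_le fuel l (S : {set 'I_K}) t (u : 'I_K -> nat) : (t <= T)%N ->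
  t%:R + 3 * D * \sum_(l <= j < l + completed fuel l S t u) 4 ^+ j * lg R K T j
    <= T%:R.
Proof.
have no_phase l' t' : (t' <= T)%N ->
    t'%:R + 3 * D * \sum_(l' <= j < l' + 0) 4 ^+ j * lg R K T j <= T%:R.
  by rewrite addn0 big_geq // mulr0 addr0 ler_nat.
elim: fuel l S t u => [|fuel IH] l S t u t_le_T /=; first exact: no_phase.
case: ifP => [_|S_gt1]; first exact: no_phase.
case: ifP => [_|fits]; first exact: no_phase.
have fits' : (t + Non l S <= T)%N by rewrite leqNgt fits.
apply: le_trans (IH l.+1 (elim l S t u) _ (fun a => u a + moff l S u a) fits').
rewrite addnS big_ltn ?ltnS ?leq_addr // -addSn natrD mulrDr addrA lerD2r lerD2l.
by apply: Non_ge; rewrite ltnNge S_gt1.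
Qed.

End OnlineBudget.

Theorem lemma4p2 (R : realType) (d K : nat) (arm : 'I_K -> 'cV[R]_d)
  (theta : 'cV[R]_d) (T Toff : nat) (pioff : 'I_K -> R) (cnt : 'I_K -> nat)
  (eta_on : nat -> R) (eta_off : 'I_K -> nat -> R) (lam : 'I_d -> R)
  (pistar : nat -> {set 'I_K} -> 'I_K -> R) :
  (0 < d)%N -> (0 < T)%N ->
  injective arm ->
  row_full (\matrix_(i < K, j < d) arm i j 0) ->
  simplex [set: 'I_K] pioff ->
  (forall a, (cnt a)%:R = pioff a * Toff%:R) ->
  (forall i j : 'I_d, (i <= j)%N -> lam i <= lam j) ->
  char_poly (Vmat arm pioff) = \prod_(i < d) ('X - (lam i)%:P) ->
  (forall (l : nat) (S : {set 'I_K}), (1 < #|S|)%N ->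
     simplex S (pistar l S) /\
     (forall pi, simplex S pi ->
        \det (Vmat arm (mix T Toff pioff pi))
          <= \det (Vmat arm (mix T Toff pioff (pistar l S))))) ->
  forall (fuel h : nat),
  is_Hinv K T (T%:R / (3 * deff arm T Toff pioff lam)) h ->
  (lM arm theta T Toff pioff cnt eta_on eta_off lam pistar fuel <= h)%N.
Proof.
(* Only the online budget is counted. *)
move=> d_gt0 T_gt0 _ _ [pioff_ge0 _] _ _ charV design fuel h [_ Hinv_max].
have deff_pos := deff_gt0 Toff d_gt0 T_gt0 pioff_ge0 charV.
have pistar_sum1 l (S : {set 'I_K}) : (1 < #|S|)%N -> \sum_a pistar l S a = 1.
  by move=> S_gt1; have [[_ [_ ->]] _] := design l S S_gt1.
have := completed_cost_le arm theta Toff pioff cnt eta_on eta_off lam pistar_sum1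
  fuel 1 setT (fun _ => 0%N) (leq0n T).
rewrite add1n add0r -/(Hsum _ _ _) => budget.
by apply: Hinv_max; rewrite ler_pdivlMr ?mulr_gt0 // mulrC.
Qed.
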